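(* Let $k \ge 2$ be a prime number. For integers $i \ge 1$ let $m_i = k^{i-1}(k-1)$ and define $0/1$ vectors $v_i$ of length $m_i$ recursively: $v_1$ is the all-zero vector of length $k-1$, and $v_{i+1}$ is the concatenation of $k-1$ copies of the block $(v_i, 1, \dots, 1)$, where the block consists of $v_i$ followed by $k^{i-1}$ ones. Index the entries of $v_i$ by $0,1,\dots,m_i-1$, let $S$ be the support of $v_i$ (the set of indices of entries equal to $1$), and let $n_i = \frac{(k-2)k^i + 1}{k-1}$. Then there are no integers $r \ge 0$, $s > 0$ with $r + s(k-1) < n_i$ such that $\{r, r+s, r+2s, \dots, r+(k-1)s\} \cap S = \emptyset$. *)

From mathcomp Require Import all_boot.
Set Implicit Arguments. Unset Strict Implicit. Unset Printing Implicit Defensive.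

(* vrec k j = v_{j+1} (the paper's v_i with i = j+1), as a 0/1 vector (true = 1).
   v_1 = all-zero of length k-1;
   v_{j+2} = (k-1) copies of the block (v_{j+1}, 1,...,1) with k^j ones. *)
Fixpoint vrec (k j : nat) : seq bool :=
  match j with
  | 0 => nseq k.-1 false
  | j'.+1 => flatten (nseq k.-1 (vrec k j' ++ nseq (k ^ j') true))
  end.

Definition vvec (k i : nat) : seq bool := vrec k i.-1.

Definition mlen (k i : nat) : nat := k ^ i.-1 * k.-1.

Definition support01 (v : seq bool) : pred nat := fun j => (j < size v) && nth false v j.

(* n_i = ((k-2) k^i + 1) / (k-1)  (exact division) *)
Definition nbound (k i : nat) : nat := ((k - 2) * k ^ i + 1) %/ (k - 1).

(* By induction on i, every
   index x < m_i having some digit equal to k - 1 among its lowest i digits lies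
   in the support of v_i: the block structure of v_(i+1) reads the top digit,
   the ones filling the positions where it is k - 1.  Given an arithmetic
   progression r + j s (j < k), write s = s' k^t with k coprime to s'; then
   t < i by the length bound n_i <= m_i, and the t-th digit of r + j s is
   (r / k^t + j s') mod k, which for prime k takes every value, in particular
   k - 1, as j ranges over 0, ..., k - 1 (k does not divide s'). *)

From mathcomp Require Import all_boot zify.

Set Implicit Arguments.
Unset Strict Implicit.
Unset Printing Implicit Defensive.

Definition digit (k t x : nat) : nat := x %/ k ^ t %% k.

Lemma digit_modn k t u x : 0 < k -> t < u -> digit k t (x %% k ^ u) = digit k t x.
Proof.
move=> k_gt0 lt_tu; rewrite /digit divn_modl ?dvdn_exp2l 1?ltnW //.
by rewrite -(expnB k_gt0 (ltnW lt_tu)) modn_dvdm // -(subnSK lt_tu) expnS dvdn_mulr.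
Qed.

Lemma digit_addMl k t r a : 0 < k -> digit k t (r + a * k ^ t) = (r %/ k ^ t + a) %% k.
Proof. by move=> k_gt0; rewrite /digit addnC divnMDl ?expn_gt0 ?k_gt0 // addnC. Qed.

Lemma nth_flatten_nseq (T : Type) (x0 : T) (s : seq T) n x :
  nth x0 (flatten (nseq n s)) x = if x < n * size s then nth x0 s (x %% size s) else x0.
Proof.
elim: n x => [|n IHn] x /=; first by rewrite nth_nil.
rewrite nth_cat; case: ltnP => hx.
  by rewrite modn_small // (leq_trans hx) // leq_addr.
rewrite IHn mulSn -(ltn_add2l (size s)) subnKC //.
by rewrite -(modnDr (x - size s)) subnK.
Qed.

Section Vrec.

Variable k : nat.
Hypothesis k_gt1 : 1 < k.

Lemma block_size j : k ^ j * k.-1 + k ^ j = k ^ j.+1.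
Proof. by rewrite -mulnSr prednK ?(ltnW k_gt1) // expnSr. Qed.

Lemma size_vrec j : size (vrec k j) = k ^ j * k.-1.
Proof.
elim: j => [|j IHj] /=; first by rewrite size_nseq mul1n.
rewrite size_flatten /shape map_nseq size_cat IHj size_nseq block_size.
have sumn_nseq n c : sumn (nseq n c) = n * c.
  by elim: n => //= n ->; rewrite mulSn.
by rewrite sumn_nseq mulnC.
Qed.

Lemma nth_vrecS j x : x < size (vrec k j.+1) ->
  nth false (vrec k j.+1) x =
    let y := x %% k ^ j.+1 in if y < k ^ j * k.-1 then nth false (vrec k j) y else true.
Proof.
rewrite !size_vrec /= nth_flatten_nseq size_cat size_vrec size_nseq block_size => hx.
rewrite mulnC hx nth_cat size_vrec; case: ifP => // /negbT; rewrite -leqNgt => hy.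
have : x %% k ^ j.+1 < k ^ j * k.-1 + k ^ j by rewrite block_size ltn_mod expn_gt0 ltnW.
by rewrite nth_nseq ltn_subLR // => ->.
Qed.

Lemma nth_vrec_digit j t x : x < size (vrec k j) -> t <= j ->
  digit k t x = k.-1 -> nth false (vrec k j) x.
Proof.
elim: j x => [|j IHj] x hx ht hd.
  move: ht hd hx; rewrite leqn0 => /eqP ->; rewrite size_vrec /digit expn0 divn1 mul1n.
  by move=> dx hx; move: dx; rewrite modn_small; lia.
rewrite (nth_vrecS hx) /=; case: ifP => // hy.
have [lt_tj | eq_tj] := ltnP t j.+1.
  by apply: IHj; rewrite ?size_vrec ?digit_modn ?(ltnW k_gt1) // -ltnS.
have def_t : t = j.+1 by apply/eqP; rewrite eqn_leq ht.
have kj_gt0 : 0 < k ^ j.+1 by rewrite expn_gt0 ltnW.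
move: hd hx; rewrite def_t size_vrec mulnC -ltn_divLR // /digit => hd hx.
have lt_k : x %/ k ^ j.+1 < k by rewrite (ltn_trans hx) // ltn_predL ltnW.
by rewrite modn_small // in hd; rewrite hd ltnn in hx.
Qed.

End Vrec.

Lemma nbound_le_mlen k i : 1 < k -> 0 < i -> nbound k i <= mlen k i.
Proof.
move=> k_gt1 i_gt0; rewrite /nbound /mlen -ltnS ltn_divLR; last lia.
rewrite -(prednK i_gt0) expnS prednK //.
have : 0 < k ^ i.-1 by rewrite expn_gt0 ltnW.
move: (k ^ i.-1) => K K_gt0; case: k k_gt1 => [|[|p]] // _.
rewrite !subSS subn0 /=; nia.
Qed.

Lemma affine_modn_onto p a b c : coprime p b -> c < p ->
  exists2 j, j < p & (a + j * b) %% p = c.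
Proof.
move=> cop_pb lt_cp; have p_gt0 : 0 < p := leq_ltn_trans (leq0n c) lt_cp.
pose f (j : 'I_p) : 'I_p := Ordinal (ltn_pmod (a + j * b) p_gt0).
have f_inj : injective f.
  suff le_inj (j1 j2 : 'I_p) : j1 <= j2 -> f j1 = f j2 -> j1 = j2.
    by move=> j1 j2; case: (leqP j1 j2) => [/le_inj | /ltnW /le_inj h /esym /h /esym].
  move=> le12 /(congr1 val) /= /eqP; rewrite eq_sym eqn_modDl eqn_mod_dvd ?leq_mul2r ?le12 ?orbT //.
  rewrite -mulnBl Gauss_dvdl // => dvd_p; apply/val_inj => /=.
  have [|/dvdn_leq le_p] := posnP (j2 - j1); first lia.
  by have := le_p p dvd_p; have := ltn_ord j2; lia.
have [g fK gK] := injF_bij f_inj.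
by exists (g (Ordinal lt_cp)) => //; have /(congr1 val) := gK (Ordinal lt_cp).
Qed.

Theorem lemma3 (k i : nat) (hk : prime k) (hi : 1 <= i) :
  ~ (exists r s : nat,
        [/\ 0 < s, r + s * (k - 1) < nbound k i &
            forall j : nat, j < k -> ~~ support01 (vvec k i) (r + j * s)]).
Proof.
move=> [r [s [s_gt0 lt_last avoid]]].
have k_gt1 := prime_gt1 hk.
have lt_m := leq_trans lt_last (nbound_le_mlen k_gt1 hi).
have [s' cop_ks' def_s] := pfactor_coprime hk s_gt0; set t := logn k s in def_s.
have lt_s : s < k ^ i.-1.
  by move: lt_m; rewrite /mlen; move: (k ^ i.-1) => K; nia.
have le_ti : t <= i.-1.
  rewrite ltnW // -(ltn_exp2l _ _ k_gt1).
  exact: leq_ltn_trans (dvdn_leq s_gt0 (pfactor_dvdnn k s)) lt_s.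
have lt_pred : k.-1 < k by rewrite ltn_predL ltnW.
have [j lt_jk dj] := affine_modn_onto (r %/ k ^ t) cop_ks' lt_pred.
apply/negP: (avoid j lt_jk).
have lt_x : r + j * s < size (vrec k i.-1).
  rewrite size_vrec //; apply: leq_ltn_trans lt_m.
  by rewrite leq_add2l mulnC leq_mul2l; lia.
rewrite /support01 /vvec lt_x (nth_vrec_digit k_gt1 lt_x le_ti) //.
by rewrite def_s mulnA digit_addMl // ltnW.
Qed.
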